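(* Let $\mathcal{D}$ be a domain with $\mathcal{SP}\subseteq\mathcal{D}\subseteq\mathcal{U}$. If there is an own-peak-only rule on $\mathcal{E}_{\mathcal{D}}$ that satisfies efficiency, the equal division guarantee, and not obvious manipulability (NOM), then $\mathcal{D}\subseteq\mathcal{C}$.
   Context: Let $N=\{1,\dots,n\}$ be a finite set of agents. $\mathcal{U}$ is the set of continuous complete preorders $R_i$ on $\mathbb{R}_+\cup\{\infty\}$ ($P_i$ strict, $I_i$ indifference), with peak $p(R_i)=\{x:xR_iy\ \forall y\}$, $\underline{p}(R_i)=\inf p(R_i)$, $\overline{p}(R_i)=\sup p(R_i)$. $R_i$ is single-peaked if $p(R_i)$ is a singleton and for $x,x'\in\mathbb{R}_+$, $xP_ix'$ whenever $x'<x\le p(R_i)$ or $p(R_i)\le x<x'$ ($\mathcal{SP}$ = set of these). $R_i$ is convex if $p(R_i)=[\underline{p}(R_i),\overline{p}(R_i)]$ and for $x,x'\in\mathbb{R}_+$, $xR_ix'$ whenever $x'<x\le\underline{p}(R_i)$ or $\overline{p}(R_i)\le x<x'$ ($\mathcal{C}$ = set of these). For $\mathcal{D}\subseteq\mathcal{U}$, an economy is $(R,\Omega)$, $R\in\mathcal{D}^n$, $\Omega>0$; $\mathcal{E}_{\mathcal{D}}$ is the set of economies; a rule is a map $\varphi:\mathcal{E}_{\mathcal{D}}\to\mathbb{R}^n_+$ with $\sum_j\varphi_j(R,\Omega)=\Omega$. Efficiency: no $x\in\mathbb{R}^n_+$ with $\sum_jx_j=\Omega$ has $x_iR_i\varphi_i(R,\Omega)$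 for all $i$ and $x_iP_i\varphi_i(R,\Omega)$ for some $i$. Own-peak-only: for $R_i'\in\mathcal{D}$ with $p(R_i')=p(R_i)$, $\varphi_i(R,\Omega)=\varphi_i(R_i',R_{-i},\Omega)$. Equal division guarantee: $\Omega/n\in p(R_i)$ implies $\varphi_i(R,\Omega)I_i\Omega/n$. Option set $O^\varphi(R_i,\Omega)=\{\varphi_i(R_i,R_{-i},\Omega):R_{-i}\in\mathcal{D}^{n-1}\}$; $R_i'\in\mathcal{D}$ is a manipulation at $(R_i,\Omega)$ if $\varphi_i(R_i',R_{-i},\Omega)P_i\varphi_i(R_i,R_{-i},\Omega)$ for some $R_{-i}$, an obvious manipulation if moreover each $x'\in O^\varphi(R_i',\Omega)$ satisfies $x'P_ix$ for some $x\in O^\varphi(R_i,\Omega)$; NOM means no obvious manipulation exists. *)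

From mathcomp Require Import all_boot all_order all_algebra.
From mathcomp Require Import all_classical all_reals all_analysis.
From mathcomp Require Import Rstruct Rstruct_topology.
Set Implicit Arguments. Unset Strict Implicit. Unset Printing Implicit Defensive.
Import Order.TTheory GRing.Theory Num.Theory.
Local Open Scope classical_set_scope.
Local Open Scope ring_scope.
Local Open Scope ereal_scope.

Notation real := Rdefinitions.R.
(* consumption space R_+ \cup {oo} is the subset [0, +oo] of the extended reals *)
Definition cons_space : set (\bar real) := [set x | 0 <= x].

(* a preference is a weak preference relation: pref x y  means  x R_i y *)
Definition pref := \bar real -> \bar real -> Prop.

Definition strict (Ri : pref) (x y : \bar real) : Prop := Ri x y /\ ~ Ri y x.
Definition indiff (Ri : pref) (x y : \bar real) : Prop := Ri x y /\ Ri y x.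

(* The relation is
   required to live on [0,+oo] (so a preference is identified with its
   restriction); continuity = closed upper and lower contour sets (closed in
   [0,+oo], equivalently closed in \bar R since [0,+oo] is closed). *)
Definition in_U (Ri : pref) : Prop :=
  (forall x y, Ri x y -> cons_space x /\ cons_space y) /\
  [/\ (forall x, cons_space x -> Ri x x),
      (forall x y, cons_space x -> cons_space y -> Ri x y \/ Ri y x),
      (forall x y z, Ri x y -> Ri y z -> Ri x z),
      (forall y, cons_space y -> closed [set x | Ri x y]) &
      (forall y, cons_space y -> closed [set x | Ri y x])].

Definition peak (Ri : pref) : set (\bar real) :=
  [set x | cons_space x /\ forall y, cons_space y -> Ri x y].
Definition peak_lo (Ri : pref) : \bar real := ereal_inf (peak Ri).
Definition peak_hi (Ri : pref) : \bar real := ereal_sup (peak Ri).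

Definition single_peaked (Ri : pref) : Prop :=
  in_U Ri /\ exists p : \bar real, peak Ri = [set p] /\
    forall x x' : real, (0 <= x)%R -> (0 <= x')%R ->
      ((x'%:E < x%:E /\ x%:E <= p) \/ (p <= x%:E /\ x%:E < x'%:E)) ->
      strict Ri x%:E x'%:E.

Definition convex_pref (Ri : pref) : Prop :=
  [/\ in_U Ri,
      peak Ri = [set x | peak_lo Ri <= x <= peak_hi Ri] &
      forall x x' : real, (0 <= x)%R -> (0 <= x')%R ->
        ((x'%:E < x%:E /\ x%:E <= peak_lo Ri) \/
         (peak_hi Ri <= x%:E /\ x%:E < x'%:E)) ->
        Ri x%:E x'%:E].

Definition profile (n : nat) := 'I_n -> pref.
Definition in_dom (D : set pref) n (Rp : profile n) : Prop := forall j, D (Rp j).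
Definition upd n (Rp : profile n) (i : 'I_n) (Ri : pref) : profile n :=
  fun j => if j == i then Ri else Rp j.

Definition rule_type (n : nat) := profile n -> real -> 'I_n -> real.
Definition is_rule (D : set pref) n (phi : rule_type n) : Prop :=
  forall Rp Om, in_dom D Rp -> (0 < Om)%R ->
    (forall j, (0 <= phi Rp Om j)%R) /\ (\sum_(j < n) phi Rp Om j = Om)%R.

Definition efficient (D : set pref) n (phi : rule_type n) : Prop :=
  forall Rp Om, in_dom D Rp -> (0 < Om)%R ->
    ~ exists x : 'I_n -> real,
      [/\ forall j, (0 <= x j)%R, (\sum_(j < n) x j = Om)%R,
          (forall j, Rp j (x j)%:E (phi Rp Om j)%:E) &
          exists j, strict (Rp j) (x j)%:E (phi Rp Om j)%:E].

Definition own_peak_only (D : set pref) n (phi : rule_type n) : Prop :=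
  forall Rp Om i Ri', in_dom D Rp -> (0 < Om)%R -> D Ri' ->
    peak Ri' = peak (Rp i) -> phi Rp Om i = phi (upd Rp i Ri') Om i.

Definition equal_division_guarantee (D : set pref) n (phi : rule_type n) : Prop :=
  forall Rp Om i, in_dom D Rp -> (0 < Om)%R ->
    peak (Rp i) (Om / n%:R)%R%:E ->
    indiff (Rp i) (phi Rp Om i)%:E (Om / n%:R)%R%:E.

Definition option_set (D : set pref) n (phi : rule_type n) (i : 'I_n)
  (Ri : pref) (Om : real) : set real :=
  [set v | exists Rp : profile n, in_dom D (upd Rp i Ri) /\ v = phi (upd Rp i Ri) Om i].

Definition manipulation (D : set pref) n (phi : rule_type n) (i : 'I_n)
  (Ri Ri' : pref) (Om : real) : Prop :=
  exists Rp : profile n, in_dom D (upd Rp i Ri) /\ D Ri' /\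
    strict Ri (phi (upd Rp i Ri') Om i)%:E (phi (upd Rp i Ri) Om i)%:E.

Definition obvious_manipulation (D : set pref) n (phi : rule_type n) (i : 'I_n)
  (Ri Ri' : pref) (Om : real) : Prop :=
  manipulation D phi i Ri Ri' Om /\
  forall x', option_set D phi i Ri' Om x' ->
    exists2 x, option_set D phi i Ri Om x & strict Ri x'%:E x%:E.

Definition NOM (D : set pref) n (phi : rule_type n) : Prop :=
  forall i Ri Ri' Om, D Ri -> D Ri' -> (0 < Om)%R ->
    ~ obvious_manipulation D phi i Ri Ri' Om.

From mathcomp Require Import all_boot all_order all_algebra.
From mathcomp Require Import all_classical all_reals all_analysis.
From mathcomp Require Import Rstruct Rstruct_topology.
From mathcomp Require Import lra.

(* A preference that is not convex has a dip: reals b < m < c with m worse than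
   both b and c.  By continuity the dip can be refined to b < m < t with t better
   than m and b better than every point of [m, t].  Take the endowment n t, so
   that equal division is t, and let agent 0 report the dipped preference, agent 1
   a tent-shaped single-peaked preference peaked at q = 2t - m, and all others
   tents peaked at t, who receive exactly t by the equal division guarantee.  NOM
   forces every agent to weakly prefer its share to t.  By own-peak-only the
   share y of agent 1 does not depend on the slope of its tent, and letting the
   slope vary pins y to [t, q]; so agent 0 receives 2t - y, a point of [m, t].
   If y = q agent 0 receives m, which is worse than t.  Otherwise giving b to
   agent 0 and 2t - b to agent 1, on the tent slope making 2t - b indifferent to
   y, is a Pareto improvement.  Finally a continuous preference without dips is
   convex: its peak is nonempty and closed, and a point between two peak points,
   or beyond the peak and worse than a point further out, would sit in a dip. *)

Set Implicit Arguments. Unset Strict Implicit. Unset Printing Implicit Defensive.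
Import Order.TTheory GRing.Theory Num.Theory.
Local Open Scope classical_set_scope.
Local Open Scope ereal_scope.

Lemma cons_space_EFin (x : real) : (0 <= x)%R -> cons_space x%:E.
Proof. by rewrite /cons_space /= lee_fin. Qed.

Lemma cons_space_EFin_ge0 (x : real) : cons_space x%:E -> (0 <= x)%R.
Proof. by rewrite /cons_space /= lee_fin. Qed.

Section Preference.
Variable Ri : pref.
Hypothesis Ri_U : in_U Ri.

Lemma pref_cons x y : Ri x y -> cons_space x /\ cons_space y.
Proof. by case: Ri_U => + _; apply. Qed.

Lemma pref_refl x : cons_space x -> Ri x x.
Proof. by case: Ri_U => _ [+ _ _ _ _]; apply. Qed.

Lemma pref_total x y : cons_space x -> cons_space y -> Ri x y \/ Ri y x.
Proof. by case: Ri_U => _ [_ + _ _ _]; apply. Qed.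

Lemma pref_trans y x z : Ri x y -> Ri y z -> Ri x z.
Proof. by case: Ri_U => _ [_ _ + _ _]; apply. Qed.

Lemma closed_upper_contour y : cons_space y -> closed [set x | Ri x y].
Proof. by case: Ri_U => _ [_ _ _ + _]; apply. Qed.

Lemma closed_lower_contour y : cons_space y -> closed [set x | Ri y x].
Proof. by case: Ri_U => _ [_ _ _ _]; apply. Qed.

Lemma strict_of_not_pref x y : cons_space x -> cons_space y ->
  ~ Ri x y -> strict Ri y x.
Proof. by move=> cx cy nxy; split=> //; case: (pref_total cx cy). Qed.

Lemma pref_of_not_strict x y : cons_space x -> cons_space y ->
  ~ strict Ri x y -> Ri y x.
Proof. by move=> cx cy nxy; apply: contrapT => /(strict_of_not_pref cy cx). Qed.

Lemma peak_strict p z : peak Ri p -> cons_space z -> ~ peak Ri z -> strict Ri p z.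
Proof.
move=> [cp pbest] cz zNpeak; split; first exact: pbest.
by move=> zp; apply: zNpeak; split=> // y cy; apply: pref_trans zp (pbest _ cy).
Qed.

Lemma peak_pref p x : peak Ri p -> Ri x p -> peak Ri x.
Proof.
move=> [_ pbest] xp; split; first by case: (pref_cons xp).
by move=> y cy; apply: pref_trans xp (pbest _ cy).
Qed.

Lemma closed_peak : closed (peak Ri).
Proof.
have -> : peak Ri = cons_space `&` \bigcap_(y in cons_space) [set x | Ri x y].
  by apply/seteqP; split=> x [cx xbest]; split.
apply: closedI; first exact: closed_ereal_le_ereal.
by apply: closed_bigI => y; apply: closed_upper_contour.
Qed.

End Preference.

Lemma closed_ereal_inf_mem (A : set (\bar real)) :
  closed A -> A !=set0 -> A (ereal_inf A).
Proof.
move=> cA A0; apply: itv_closed_infimums => //.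
by split; [exact: ereal_inf_lbound | move=> x /le_ereal_inf_tmp].
Qed.

Lemma closed_ereal_sup_mem (A : set (\bar real)) :
  closed A -> A !=set0 -> A (ereal_sup A).
Proof.
move=> cA A0; apply: itv_closed_supremums => //.
by split; [exact: ereal_sup_ubound | move=> x; exact: ge_ereal_sup].
Qed.

Lemma closed_ereal_left_limit (A : set (\bar real)) (m r : real) : closed A ->
  (m < r)%R -> (forall z : real, (m < z < r)%R -> A z%:E) -> A r%:E.
Proof.
move=> cA mr mrA; apply: (@closed_cvg _ _ r^'- _ (fun z : real => z%:E) A cA).
- near=> z; apply: mrA; apply/andP; split; near: z.
  + exact: nbhs_left_gt.
  + exact: nbhs_left_lt.
- by apply: cvg_EFin; [exact: nearW | exact: cvg_at_left_filter].
Unshelve. all: by end_near.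
Qed.

Lemma closed_pinfty_bounded (A : set (\bar real)) : closed A -> ~ A +oo ->
  exists M : real, forall w : real, (M < w)%R -> ~ A w%:E.
Proof.
move=> cA Apinfty.
have : nbhs +oo (~` A) by have := closed_openC cA; rewrite openE => /(_ +oo Apinfty).
by case/nbhs_ereal_pinfty => _ [M [_ MA]]; exists M => w /MA.
Qed.

Section PeakExistence.
Variable Ri : pref.
Hypothesis Ri_U : in_U Ri.

Lemma pref_max_seq (K : set real) (z0 : real) : K z0 -> K `<=` [set x | 0 <= x]%R ->
  forall s : seq real, (forall z, z \in s -> K z) ->
  exists2 w, K w & forall z, z \in s -> Ri w%:E z%:E.
Proof.
move=> Kz0 K_ge0; elim=> [|z s IHs] sK; first by exists z0.
have [w Kw wbest] : exists2 w, K w & forall y, y \in s -> Ri w%:E y%:E.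
  by apply: IHs => y ys; apply: sK; rewrite inE ys orbT.
have Kz : K z by apply: sK; rewrite inE eqxx.
have [cw cz] := (cons_space_EFin (K_ge0 _ Kw), cons_space_EFin (K_ge0 _ Kz)).
case: (pref_total Ri_U cw cz) => [wz | zw].
- by exists w => // y; rewrite inE => /orP [/eqP -> // | /wbest].
- exists z => // y; rewrite inE => /orP [/eqP -> | /wbest]; first exact: pref_refl.
  exact: pref_trans.
Qed.

Lemma pref_max_segment (M : real) : (0 <= M)%R ->
  exists2 w : real, (0 <= w <= M)%R & forall z : real, (0 <= z <= M)%R -> Ri w%:E z%:E.
Proof.
move=> M_ge0; pose K := [set w : real | (0 <= w <= M)%R].
have K0 : K 0%R by rewrite /K /= lexx.
have K_ge0 : K `<=` [set x | 0 <= x]%R by move=> w /andP [].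
have : (\bigcap_(z in K) (K `&` [set w | Ri w%:E z%:E])) !=set0.
  have : compact K by have := @segment_compact _ 0%R M; rewrite set_itvE.
  rewrite compact_In0; apply.
  - exists (fun z => [set w : real | Ri w%:E z%:E]) => // z Kz.
    have := closed_upper_contour Ri_U (cons_space_EFin (K_ge0 _ Kz)).
    apply: preimage_closed => // x _.
    by apply: cvg_EFin; [exact: nearW | exact: cvg_id].
  - move=> F FK; have [|w Kw wbest] := pref_max_seq K0 K_ge0 (s := finmap.enum_fset F).
      by move=> z /FK; rewrite inE.
    by exists w => z /= zF; split => //; apply: wbest.
by case=> w wbest; exists w; [case: (wbest _ K0) | move=> z /wbest []].
Qed.

Lemma peak_nonempty : peak Ri !=set0.
Proof.
have c_pinfty : cons_space +oo by rewrite /cons_space /= le0y.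
have [pinfty_peak | pinftyNpeak] := pselect (peak Ri +oo); first by exists +oo.
have [y cy yNpinfty] : exists2 y, cons_space y & ~ Ri +oo y.
  apply: contrapT => /forall2NP all_pinfty; apply: pinftyNpeak; split=> // y cy.
  by case: (all_pinfty y) => // /contrapT.
have [M M_y] := closed_pinfty_bounded (closed_upper_contour Ri_U cy) yNpinfty.
have [v y_v] : exists v : real, y = v%:E.
  case: y cy yNpinfty {M_y} => [v | | ] cy yN; first by exists v.
  - by case: yN; exact: pref_refl.
  - by [].
(* Points beyond M are worse than y, so a best point of [0, M'] is a peak. *)
pose M' := Num.max M v.
have [M_M' v_M'] : (M <= M')%R /\ (v <= M')%R by rewrite !le_max !lexx orbT.
have v_ge0 : (0 <= v)%R by apply: cons_space_EFin_ge0; rewrite -y_v.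
have [w /andP [w_ge0 w_M'] wbest] := pref_max_segment (le_trans v_ge0 v_M').
exists w%:E; split=> [|x cx]; first exact: cons_space_EFin.
have w_y : Ri w%:E y by rewrite y_v; apply: wbest; rewrite v_ge0.
case: x cx => [x | | ] cx //.
- have x_ge0 := cons_space_EFin_ge0 cx.
  have [x_M' | M'_x] := lerP x M'; first by apply: wbest; rewrite x_ge0.
  apply: (pref_trans Ri_U w_y).
  by case: (strict_of_not_pref Ri_U cx cy (M_y _ (le_lt_trans M_M' M'_x))).
- by apply: (pref_trans Ri_U w_y); case: (strict_of_not_pref Ri_U c_pinfty cy yNpinfty).
Qed.

Lemma pinfty_strict_finite (x : real) : (0 <= x)%R -> strict Ri +oo x%:E ->
  exists2 c : real, (x < c)%R & strict Ri c%:E x%:E.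
Proof.
move=> x_ge0 [_ xNpinfty].
have [M M_x] := closed_pinfty_bounded (closed_lower_contour Ri_U (cons_space_EFin x_ge0)) xNpinfty.
have [M_max x_max] : (M <= Num.max M x)%R /\ (x <= Num.max M x)%R.
  by rewrite !le_max !lexx orbT.
pose c := (Num.max M x + 1)%R.
have [M_c x_c] : (M < c)%R /\ (x < c)%R by rewrite /c; split; lra.
exists c => //; apply: (strict_of_not_pref Ri_U) (M_x _ M_c) => //.
by apply: cons_space_EFin; lra.
Qed.

End PeakExistence.

Section Dip.
Variable Ri : pref.
Hypothesis Ri_U : in_U Ri.

Lemma dip_interval (b m c : real) : (0 <= b)%R -> (b < m < c)%R ->
  strict Ri b%:E m%:E -> strict Ri c%:E m%:E ->
  exists t : real, [/\ (m < t)%R, strict Ri t%:E m%:E &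
    forall z : real, (m <= z <= t)%R -> strict Ri b%:E z%:E].
Proof.
move=> b_ge0 /andP [b_m m_c] [_ mNb] [_ mNc].
have [cb cm] : cons_space b%:E /\ cons_space m%:E by split; apply: cons_space_EFin; lra.
(* The infimum of B is the first point right of m at least as good as b, or c. *)
pose B := [set x | m%:E <= x] `&` [set x | x <= c%:E] `&`
          ([set x | Ri x b%:E] `|` [set x | c%:E <= x]).
have B_closed : closed B.
  apply: closedI; first by apply: closedI; [exact: closed_ereal_le_ereal | exact: closed_ereal_ge_ereal].
  by apply: closedU; [exact: closed_upper_contour | exact: closed_ereal_le_ereal].
have Bc : B c%:E by split; [split | right]; rewrite /= lee_fin ?lexx ?(ltW m_c).
have := ereal_inf_lbound (S := B); have := closed_ereal_inf_mem B_closed (ex_intro _ _ Bc).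
case: (ereal_inf B) => [r | | ] [[m_r r_c] r_b_or_c] B_ge //.
move: m_r r_c; rewrite /= !lee_fin => m_r r_c.
have m_lt_r : (m < r)%R.
  rewrite lt_neqAle m_r andbT; apply/eqP => m_eq_r; move: r_b_or_c; rewrite -m_eq_r.
  by case=> [//| /=]; rewrite lee_fin leNgt m_c.
have below_r z : (m <= z < r)%R -> strict Ri b%:E z%:E.
  move=> /andP [m_z z_r]; apply: contrapT => zNb.
  have : (r%:E <= z%:E) by apply: B_ge; split; [rewrite /= !lee_fin m_z; lra | left;
    apply: (pref_of_not_strict Ri_U) => //; apply: cons_space_EFin; lra].
  by rewrite lee_fin; lra.
have [t /andP [m_t t_r] tm] : exists2 t : real, (m < t < r)%R & strict Ri t%:E m%:E.
  apply: contrapT => /forall2NP Nt.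
  have m_r_pref : Ri m%:E r%:E.
    apply: (closed_ereal_left_limit (closed_lower_contour Ri_U cm) m_lt_r) => z mzr.
    case: (Nt z) => // /(pref_of_not_strict Ri_U); apply => //.
    by apply: cons_space_EFin; move: mzr => /andP[]; lra.
  case: r_b_or_c => [r_b | /=]; first exact: mNb (pref_trans Ri_U m_r_pref r_b).
  by rewrite lee_fin => c_r; apply: mNc; have -> : c = r by lra.
by exists t; split=> // z /andP [m_z z_t]; apply: below_r; rewrite m_z /=; lra.
Qed.

End Dip.

Lemma cons_space_lt_fin x y : cons_space x -> x < y ->
  exists2 v : real, (0 <= v)%R & x = v%:E.
Proof.
case: x => [v | | ] cx //.
- by exists v => //; exact: cons_space_EFin_ge0.
- by rewrite ltNge leey.
Qed.

Section ConvexOfNoDip.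
Variable Ri : pref.
Hypothesis Ri_U : in_U Ri.
Hypothesis no_dip : forall b m c : real, (0 <= b)%R -> (b < m < c)%R ->
  strict Ri b%:E m%:E -> strict Ri c%:E m%:E -> False.

Lemma no_dip_ereal (b m : real) (c : \bar real) : (0 <= b)%R -> (b < m)%R ->
  m%:E < c -> strict Ri b%:E m%:E -> strict Ri c m%:E -> False.
Proof.
move=> b_ge0 b_m; case: c => [c | | ] m_c bm cm.
- by apply: (no_dip b_ge0 _ bm cm); rewrite b_m -lte_fin.
- have [c' m_c' c'm] := pinfty_strict_finite Ri_U (ltW (le_lt_trans b_ge0 b_m)) cm.
  by apply: (no_dip b_ge0 _ bm c'm); rewrite b_m.
- by move: m_c; rewrite ltNge leNye.
Qed.

Lemma peak_lo_mem : peak Ri (peak_lo Ri).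
Proof. exact: closed_ereal_inf_mem (closed_peak Ri_U) (peak_nonempty Ri_U). Qed.

Lemma peak_hi_mem : peak Ri (peak_hi Ri).
Proof. exact: closed_ereal_sup_mem (closed_peak Ri_U) (peak_nonempty Ri_U). Qed.

Lemma peak_itv : peak Ri = [set x | peak_lo Ri <= x <= peak_hi Ri].
Proof.
apply/seteqP; split=> x.
  by move=> px; rewrite /= ereal_inf_lbound ?ereal_sup_ubound.
move=> /andP [lo_x x_hi]; apply: contrapT => xNpeak.
have [[c_lo _] [c_hi _]] := (peak_lo_mem, peak_hi_mem).
have cx : cons_space x := le_trans c_lo lo_x.
have lo_lt_x : peak_lo Ri < x.
  by rewrite lt_neqAle lo_x andbT; apply: contra_notN xNpeak => /eqP <-; exact: peak_lo_mem.
have x_lt_hi : x < peak_hi Ri.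
  by rewrite lt_neqAle x_hi andbT; apply: contra_notN xNpeak => /eqP ->; exact: peak_hi_mem.
have [v _ xE] := cons_space_lt_fin cx x_lt_hi.
have [u u_ge0 loE] := cons_space_lt_fin c_lo lo_lt_x.
have lo_x' := peak_strict Ri_U peak_lo_mem cx xNpeak.
have hi_x' := peak_strict Ri_U peak_hi_mem cx xNpeak.
rewrite xE loE lte_fin in lo_lt_x lo_x' hi_x' x_lt_hi.
exact: no_dip_ereal u_ge0 lo_lt_x x_lt_hi lo_x' hi_x'.
Qed.

Lemma pref_below_peak (x x' : real) : (0 <= x')%R -> x'%:E < x%:E ->
  x%:E <= peak_lo Ri -> Ri x%:E x'%:E.
Proof.
move=> x'_ge0 x'_x x_lo; apply: contrapT => xNx'.
have cx' := cons_space_EFin x'_ge0.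
have cx : cons_space x%:E by apply: cons_space_EFin; rewrite lte_fin in x'_x; lra.
have xNpeak : ~ peak Ri x%:E by case=> _ /(_ _ cx').
have x_lo' : x%:E < peak_lo Ri.
  by rewrite lt_neqAle x_lo andbT; apply: contra_notN xNpeak => /eqP ->; exact: peak_lo_mem.
rewrite lte_fin in x'_x.
exact: no_dip_ereal x'_ge0 x'_x x_lo' (strict_of_not_pref Ri_U cx cx' xNx')
  (peak_strict Ri_U peak_lo_mem cx xNpeak).
Qed.

Lemma pref_above_peak (x x' : real) : (0 <= x)%R -> peak_hi Ri <= x%:E ->
  x%:E < x'%:E -> Ri x%:E x'%:E.
Proof.
move=> x_ge0 hi_x x_x'; apply: contrapT => xNx'.
have cx := cons_space_EFin x_ge0.
have cx' : cons_space x'%:E by apply: cons_space_EFin; rewrite lte_fin in x_x'; lra.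
have xNpeak : ~ peak Ri x%:E by case=> _ /(_ _ cx').
have hi_x' : peak_hi Ri < x%:E.
  by rewrite lt_neqAle hi_x andbT; apply: contra_notN xNpeak => /eqP <-; exact: peak_hi_mem.
have [h h_ge0 hiE] := cons_space_lt_fin peak_hi_mem.1 hi_x'.
have hi_strict := peak_strict Ri_U peak_hi_mem cx xNpeak.
rewrite hiE lte_fin in hi_x' hi_strict; rewrite lte_fin in x_x'.
apply: (no_dip h_ge0 _ hi_strict (strict_of_not_pref Ri_U cx cx' xNx')).
by rewrite hi_x'.
Qed.

Lemma convex_of_no_dip : convex_pref Ri.
Proof.
split=> //; first exact: peak_itv.
move=> x x' x_ge0 x'_ge0 [[x'_x x_lo] | [hi_x x_x']].
- exact: pref_below_peak.
- exact: pref_above_peak.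
Qed.

End ConvexOfNoDip.

Section Tent.
Variables (q r : real).

(* Single-peaked at q, with a right-hand slope r that can be tuned freely. *)
Definition tent_loss (x : \bar real) : \bar real :=
  if x is v%:E then (if (v <= q)%R then q - v else r * (v - q))%R%:E else +oo.

Definition tent : pref := fun x y =>
  [/\ cons_space x, cons_space y & tent_loss x <= tent_loss y].

Lemma tent_loss_ge0 x : (0 < r)%R -> 0 <= tent_loss x.
Proof.
move=> r_gt0; case: x => [v | | ] //=; rewrite lee_fin; case: (lerP v q) => v_q.
- lra.
- by apply: mulr_ge0; lra.
Qed.

Lemma tent_loss_peak : tent_loss q%:E = 0.
Proof. by rewrite /= lexx subrr. Qed.

Lemma tent_loss_le (c : real) x : (0 < r)%R -> (0 <= c)%R -> cons_space x ->
  (tent_loss x <= c%:E) = ((q - c)%:E <= x <= (q + c / r)%:E).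
Proof.
move=> r_gt0 c_ge0; have c_r : (r * (c / r) = c)%R by rewrite mulrC divfK ?gt_eqF.
case: x => [v | | ] //= _; last by rewrite !leye_eq leey.
rewrite !lee_fin; case: (lerP v q) => v_q; apply/idP/andP.
- by move=> h; split; nra.
- by case=> h1 h2; nra.
- by move=> h; split; nra.
- by case=> h1 h2; nra.
Qed.

Lemma tent_loss_ge (c : real) x : (0 < r)%R -> (0 <= c)%R -> cons_space x ->
  (c%:E <= tent_loss x) = ((x <= (q - c)%:E) || ((q + c / r)%:E <= x)).
Proof.
move=> r_gt0 c_ge0; have c_r : (r * (c / r) = c)%R by rewrite mulrC divfK ?gt_eqF.
case: x => [v | | ] //= _; last by rewrite !leey.
rewrite !lee_fin; case: (lerP v q) => v_q; apply/idP/orP.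
- by move=> h; left; nra.
- by case=> h; nra.
- by move=> h; right; nra.
- by case=> h; nra.
Qed.

Lemma closed_tent_upper y : (0 < r)%R -> cons_space y -> closed [set x | tent x y].
Proof.
move=> r_gt0 cy; have := tent_loss_ge0 y r_gt0; case lossE : (tent_loss y) => [c | | ] // c_ge0.
- rewrite lee_fin in c_ge0.
  have -> : [set x | tent x y] =
      cons_space `&` [set x | (q - c)%:E <= x] `&` [set x | x <= (q + c / r)%:E].
    apply/seteqP; split=> x.
    + by case=> cx _; rewrite lossE tent_loss_le // => /andP [].
    + by case=> [[cx ? ?]]; split=> //; rewrite lossE tent_loss_le //; apply/andP.
  apply: closedI; last exact: closed_ereal_ge_ereal.
  by apply: closedI; exact: closed_ereal_le_ereal.
- have -> : [set x | tent x y] = cons_space.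
    by apply/seteqP; split=> x; [case | split=> //; rewrite lossE leey].
  exact: closed_ereal_le_ereal.
Qed.

Lemma closed_tent_lower y : (0 < r)%R -> cons_space y -> closed [set x | tent y x].
Proof.
move=> r_gt0 cy; have := tent_loss_ge0 y r_gt0; case lossE : (tent_loss y) => [c | | ] // c_ge0.
- rewrite lee_fin in c_ge0.
  have -> : [set x | tent y x] =
      cons_space `&` ([set x | x <= (q - c)%:E] `|` [set x | (q + c / r)%:E <= x]).
    apply/seteqP; split=> x.
    + by case=> _ cx; rewrite lossE tent_loss_ge // => /orP.
    + by case=> cx ?; split=> //; rewrite lossE tent_loss_ge //; apply/orP.
  apply: closedI; first exact: closed_ereal_le_ereal.
  by apply: closedU; [exact: closed_ereal_ge_ereal | exact: closed_ereal_le_ereal].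
- have -> : [set x | tent y x] = [set x | +oo <= x].
    apply/seteqP; split=> -[x | | ] //=.
    + by case=> _ _; rewrite lossE leye_eq.
    + by case.
    + by split=> //; rewrite ?lossE //= /cons_space le0y.
  exact: closed_ereal_le_ereal.
Qed.

Lemma tent_U : (0 < r)%R -> in_U tent.
Proof.
move=> r_gt0; split; first by move=> x y [].
split.
- by move=> x cx; split.
- by move=> x y cx cy; case/orP: (le_total (tent_loss x) (tent_loss y)); [left | right].
- by move=> x y z [cx _ xy] [_ cz yz]; split=> //; exact: le_trans xy yz.
- by move=> y; exact: closed_tent_upper.
- by move=> y; exact: closed_tent_lower.
Qed.

Lemma tent_peak : (0 <= q)%R -> (0 < r)%R -> peak tent = [set q%:E].
Proof.
move=> q_ge0 r_gt0; have cq := cons_space_EFin q_ge0.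
apply/seteqP; split=> x.
- case=> cx /(_ _ cq) [_ _]; rewrite tent_loss_peak.
  by rewrite (tent_loss_le (c := 0%R)) // subr0 mul0r addr0 -eq_le => /eqP.
- move=> /= ->; split=> // y cy; split=> //; rewrite tent_loss_peak.
  exact: tent_loss_ge0.
Qed.

Lemma tent_single_peaked : (0 <= q)%R -> (0 < r)%R -> single_peaked tent.
Proof.
move=> q_ge0 r_gt0; split; first exact: tent_U.
exists q%:E; split; first exact: tent_peak.
move=> x x' x_ge0 x'_ge0 mono.
have loss_lt : tent_loss x%:E < tent_loss x'%:E.
  move: mono; rewrite /= !lte_fin !lee_fin.
  by case: (lerP x q) => ?; case: (lerP x' q) => ? [] [? ?]; nra.
split; first by split; [exact: cons_space_EFin | exact: cons_space_EFin | exact: ltW].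
by case=> _ _ /(lt_le_trans loss_lt); rewrite ltxx.
Qed.

End Tent.

Section Profiles.
Local Open Scope ring_scope.
Variables (n : nat) (D : set pref).

Lemma in_dom_upd (Rp : profile n) k S : in_dom D Rp -> D S -> in_dom D (upd Rp k S).
Proof. by move=> Rp_D S_D j; rewrite /upd; case: (j == k). Qed.

Lemma upd_id (Rp : profile n) k : upd Rp k (Rp k) = Rp.
Proof. by apply: funext => j; rewrite /upd; case: eqP => // ->. Qed.

Lemma upd_at (Rp : profile n) k S : upd Rp k S k = S.
Proof. by rewrite /upd eqxx. Qed.

Lemma sumr_off_pair (f g : 'I_n -> real) i j : i != j ->
  (forall k, k != i -> k != j -> f k = g k) ->
  \sum_k f k - \sum_k g k = (f i - g i) + (f j - g j).
Proof.
move=> ij fg; rewrite -sumrB (bigD1 i) //= (bigD1 j) /=; last by rewrite eq_sym.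
by rewrite big1 ?addr0 // => k /andP [ki kj]; rewrite fg ?subrr.
Qed.

End Profiles.

Section Rule.
Local Open Scope ring_scope.
Variables (n : nat) (D : set pref) (phi : rule_type n).
Hypotheses (n_ge2 : (2 <= n)%N) (SP_D : single_peaked `<=` D) (D_U : D `<=` in_U)
  (phi_rule : is_rule D phi) (phi_opo : own_peak_only D phi)
  (phi_eff : efficient D phi) (phi_edg : equal_division_guarantee D phi)
  (phi_nom : NOM D phi).

Lemma tent_in_D q r : 0 <= q -> 0 < r -> D (tent q r).
Proof. by move=> q_ge0 r_gt0; apply: SP_D; exact: tent_single_peaked. Qed.

Lemma equal_division_ge0 (Om : real) : 0 < Om -> 0 <= Om / n%:R.
Proof. by move=> Om_gt0; apply: divr_ge0; [exact: ltW | exact: ler0n]. Qed.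

Lemma share_at_peak Rp Om k : in_dom D Rp -> 0 < Om ->
  peak (Rp k) = [set (Om / n%:R)%:E] -> phi Rp Om k = Om / n%:R.
Proof.
move=> Rp_D Om_gt0 peakE.
have ed_peak : peak (Rp k) (Om / n%:R)%:E by rewrite peakE.
have [share_ed _] := phi_edg Rp_D Om_gt0 ed_peak.
by have := peak_pref (D_U (Rp_D k)) ed_peak share_ed; rewrite peakE => -[].
Qed.

Lemma share_pref_equal_division Rp Om k : in_dom D Rp -> 0 < Om ->
  Rp k (phi Rp Om k)%:E (Om / n%:R)%:E.
Proof.
move=> Rp_D Om_gt0; apply: contrapT => shareN.
have ed_ge0 := equal_division_ge0 Om_gt0.
have share_ge0 : 0 <= phi Rp Om k by case: (phi_rule Rp_D Om_gt0) => + _; apply.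
have ed_share := strict_of_not_pref (D_U (Rp_D k)) (cons_space_EFin share_ge0)
  (cons_space_EFin ed_ge0) shareN.
pose S := tent (Om / n%:R) 1.
have S_D : D S by exact: tent_in_D.
have S_share Rp' : in_dom D (upd Rp' k S) -> phi (upd Rp' k S) Om k = Om / n%:R.
  by move=> Rp'_D; apply: share_at_peak => //; rewrite upd_at tent_peak.
apply: (phi_nom (i := k) (Rp_D k) S_D Om_gt0); split.
- exists Rp; rewrite upd_id (S_share Rp); last exact: in_dom_upd.
  by split; [exact: Rp_D | split].
- move=> _ [Rp' [Rp'_D ->]]; rewrite S_share //.
  by exists (phi Rp Om k) => //; exists Rp; rewrite upd_id.
Qed.

Let n_gt0 : (0 : real) < n%:R.
Proof. by rewrite ltr0n; exact: ltnW. Qed.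

Let equal_division_mul (t : real) : t * n%:R / n%:R = t.
Proof. by rewrite mulfK // lt0r_neq0. Qed.

Let i0 : 'I_n := Ordinal (ltnW n_ge2).
Let j0 : 'I_n := Ordinal n_ge2.

(* With endowment t * n equal division is t, so agents other than i0 and j0
   receive exactly t. *)
Definition pair_profile (Ri S : pref) (t : real) : profile n :=
  fun k => if k == i0 then Ri else if k == j0 then S else tent t 1.

Lemma pair_profile_in_dom Ri S t : D Ri -> D S -> 0 <= t -> in_dom D (pair_profile Ri S t).
Proof.
move=> Ri_D S_D t_ge0 k; rewrite /pair_profile.
by case: (k == i0) => //; case: (k == j0) => //; exact: tent_in_D.
Qed.

Lemma pair_profile_share_other Ri S t k : D Ri -> D S -> 0 < t -> k != i0 -> k != j0 ->
  phi (pair_profile Ri S t) (t * n%:R) k = t.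
Proof.
move=> Ri_D S_D t_gt0 ki kj; apply: etrans (equal_division_mul t).
apply: share_at_peak; first exact: pair_profile_in_dom (ltW t_gt0).
  exact: mulr_gt0.
by rewrite equal_division_mul /pair_profile (negbTE ki) (negbTE kj) tent_peak ?ltW.
Qed.

Lemma pair_profile_share_sum Ri S t : D Ri -> D S -> 0 < t ->
  phi (pair_profile Ri S t) (t * n%:R) i0 + phi (pair_profile Ri S t) (t * n%:R) j0 = t + t.
Proof.
move=> Ri_D S_D t_gt0.
have := sumr_off_pair (g := fun=> t) (i := i0) (j := j0) isT
  (fun k => pair_profile_share_other (k := k) Ri_D S_D t_gt0).
have [_ ->] := phi_rule (pair_profile_in_dom Ri_D S_D (ltW t_gt0)) (mulr_gt0 t_gt0 n_gt0).
by rewrite sumr_const card_ord mulr_natr subrr; lra.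
Qed.

Definition tent_share Ri t q := phi (pair_profile Ri (tent q 1) t) (t * n%:R) j0.

Lemma pair_profile_share_j0 Ri t q r : D Ri -> 0 < t -> 0 <= q -> 0 < r ->
  phi (pair_profile Ri (tent q r) t) (t * n%:R) j0 = tent_share Ri t q.
Proof.
move=> Ri_D t_gt0 q_ge0 r_gt0.
have updE : upd (pair_profile Ri (tent q 1) t) j0 (tent q r) = pair_profile Ri (tent q r) t.
  by apply: funext => k; rewrite /upd /pair_profile; case: eqP => // ->.
rewrite -updE -phi_opo //.
- exact: pair_profile_in_dom (tent_in_D _ _) (ltW t_gt0).
- exact: mulr_gt0.
- exact: tent_in_D.
- by rewrite /pair_profile /= !tent_peak.
Qed.

Lemma pair_profile_share_i0 Ri t q r : D Ri -> 0 < t -> 0 <= q -> 0 < r ->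
  phi (pair_profile Ri (tent q r) t) (t * n%:R) i0 = t + t - tent_share Ri t q.
Proof.
move=> Ri_D t_gt0 q_ge0 r_gt0.
have := pair_profile_share_sum Ri_D (tent_in_D q_ge0 r_gt0) t_gt0.
by rewrite pair_profile_share_j0 //; lra.
Qed.

Lemma tent_share_bounds Ri t q : D Ri -> 0 < t -> t <= q ->
  t <= tent_share Ri t q <= q.
Proof.
move=> Ri_D t_gt0 t_q; set y := tent_share Ri t q.
have q_ge0 : 0 <= q by lra.
(* NOM holds at every slope r, and a share right of q loses to t on steep tents. *)
have y_loss r : 0 < r -> (tent_loss q r y%:E <= (q - t)%:E)%E.
  move=> r_gt0; have := share_pref_equal_division j0
    (pair_profile_in_dom Ri_D (tent_in_D q_ge0 r_gt0) (ltW t_gt0)) (mulr_gt0 t_gt0 n_gt0).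
  rewrite pair_profile_share_j0 // -/y equal_division_mul /pair_profile /= => -[_ _].
  by rewrite /= t_q.
have t_y : t <= y by move: (y_loss 1 ltr01); rewrite /= lee_fin; case: (lerP y q); lra.
rewrite t_y /=; case: (lerP y q) => // q_y.
pose r := (q - t + 1) / (y - q).
have r_gt0 : 0 < r by apply: divr_gt0; lra.
have r_y : r * (y - q) = q - t + 1 by rewrite /r divfK // gt_eqF // subr_gt0.
by move: (y_loss r r_gt0); rewrite /= (lt_geF q_y) lee_fin r_y; lra.
Qed.

Lemma tent_share_efficient Ri (b t q : real) : D Ri -> 0 <= b -> 0 < t -> t <= q ->
  b < t + t - q -> tent_share Ri t q < q ->
  ~ strict Ri b%:E (t + t - tent_share Ri t q)%:E.
Proof.
move=> Ri_D b_ge0 t_gt0 t_q b_lt y_lt_q b_share.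
have /andP [t_y _] := tent_share_bounds Ri_D t_gt0 t_q.
set y := tent_share Ri t q in t_y y_lt_q b_share.
have q_ge0 : 0 <= q by lra.
(* Moving i0 to b and j0 to w is a Pareto improvement once j0's tent slope
   makes w indifferent to its share y. *)
pose w := t + t - b; have [wE q_w] : w = t + t - b /\ q < w by split; rewrite /w; lra.
pose r := (q - y) / (w - q).
have r_gt0 : 0 < r by apply: divr_gt0; lra.
have r_w : r * (w - q) = q - y by rewrite /r divfK // gt_eqF // subr_gt0.
apply: (phi_eff (pair_profile_in_dom Ri_D (tent_in_D q_ge0 r_gt0) (ltW t_gt0))
  (mulr_gt0 t_gt0 n_gt0)).
pose x k := if k == i0 then b else if k == j0 then w else t.
have x_other k : k != i0 -> k != j0 -> x k = t.
  by move=> ki kj; rewrite /x (negbTE ki) (negbTE kj).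
have ct := cons_space_EFin (ltW t_gt0).
exists x; split.
- by move=> k; rewrite /x; case: ifP => _ //; case: ifP => _; lra.
- have := sumr_off_pair (f := x) (i := i0) (j := j0) isT x_other.
  by rewrite sumr_const card_ord /x /= mulr_natr; lra.
- move=> k; rewrite /x /pair_profile; case: (eqVneq k i0) => [-> | ki] /=.
    by rewrite pair_profile_share_i0 //; case: b_share.
  case: (eqVneq k j0) => [-> | kj] /=.
    rewrite pair_profile_share_j0 // -/y; split; try by apply: cons_space_EFin; lra.
    by rewrite /= (ltW y_lt_q) (lt_geF q_w) lee_fin r_w.
  by rewrite pair_profile_share_other //; exact: tent_in_D.
- by exists i0; rewrite /= pair_profile_share_i0.
Qed.

Lemma no_dip_of_rule Ri (b m t : real) : D Ri -> 0 <= b -> b < m < t ->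
  strict Ri t%:E m%:E -> (forall z : real, m <= z <= t -> strict Ri b%:E z%:E) -> False.
Proof.
move=> Ri_D b_ge0 /andP [b_m m_t] [_ mNt] b_below.
have t_gt0 : 0 < t by lra.
pose q := t + (t - m); have [q_ge0 t_q] : 0 <= q /\ t <= q by rewrite /q; split; lra.
have /andP [t_y y_q] := tent_share_bounds Ri_D t_gt0 t_q.
case: (ltrP (tent_share Ri t q) q) => [y_lt_q | q_y].
  apply: (tent_share_efficient Ri_D b_ge0 t_gt0 t_q _ y_lt_q).
    by rewrite /q; lra.
  by apply: b_below; rewrite /q in y_q *; lra.
have := share_pref_equal_division i0
  (pair_profile_in_dom Ri_D (tent_in_D q_ge0 ltr01) (ltW t_gt0)) (mulr_gt0 t_gt0 n_gt0).
rewrite pair_profile_share_i0 // equal_division_mul /pair_profile /=.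
by rewrite (_ : t + t - tent_share Ri t q = m) //; rewrite /q in y_q q_y *; lra.
Qed.

End Rule.

Theorem lemma4 (n : nat) (D : set pref) :
  (2 <= n)%N ->
  single_peaked `<=` D -> D `<=` in_U ->
  (exists phi : rule_type n,
     [/\ is_rule D phi, own_peak_only D phi, efficient D phi,
         equal_division_guarantee D phi & NOM D phi]) ->
  D `<=` convex_pref.
Proof.
move=> n_ge2 SP_D D_U [phi [phi_rule phi_opo phi_eff phi_edg phi_nom]] Ri Ri_D.
have Ri_U := D_U _ Ri_D.
apply: (convex_of_no_dip Ri_U) => b m c b_ge0 bmc bm cm.
have [t [m_t tm b_below]] := dip_interval Ri_U b_ge0 bmc bm cm.
apply: (no_dip_of_rule n_ge2 SP_D D_U phi_rule phi_opo phi_eff phi_edg phi_nom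
  Ri_D b_ge0 _ tm b_below).
by case/andP: bmc => -> _.
Qed.
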